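(* Fix a positive integer $n$ and let $f_n(z)=\frac{z^n(2-z)}{2z-1}$, defined on $\mathbb{D}\setminus\{1/2\}$. Then $f_n\in\mathcal{S}_1$, and there exist $\delta_n>0$ and $\delta_n'>0$ such that: $P_n(f_n;z_1,\dots,z_n)$ is positive semidefinite for all distinct $z_1,\dots,z_n$ with $|z_i|<\delta_n$; and $P_{n+1}(f_n;z_1,\dots,z_{n+1})$ has exactly one negative eigenvalue for all distinct $z_1,\dots,z_{n+1}$ with $|z_i|<\delta_n'$.
   Context: $\mathbb{D}$ is the open unit disk. Pick matrix: $P_n(f;z_1,\dots,z_n)=\left[\frac{1-f(z_i)\overline{f(z_j)}}{1-z_i\overline{z_j}}\right]_{i,j=1}^n$. $\mathcal{S}_\kappa$: functions defined on $\mathbb{D}\setminus\Lambda$ for a discrete $\Lambda$ (at most countable, accumulating only on the unit circle) all of whose Pick matrices at distinct points have at most $\kappa$ negative eigenvalues, at least one having exactly $\kappa$. *)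

From HB Require Import structures.
From mathcomp Require Import all_boot all_order all_algebra.
From mathcomp Require Import complex.
From mathcomp Require Import reals classical_sets cardinality.

Set Implicit Arguments.
Unset Strict Implicit.
Unset Printing Implicit Defensive.

Import Order.TTheory GRing.Theory Num.Theory.
Local Open Scope ring_scope.
Local Open Scope classical_set_scope.

Section Defs.
Variable R : realType.
Local Notation C := R[i].

Definition disk : set C := [set z | `|z| < 1].

Definition PickM (f : C -> C) (N : nat) (z : 'I_N -> C) : 'M[C]_N :=
  \matrix_(i, j) ((1 - f (z i) * (f (z j))^*) / (1 - z i * (z j)^*)).

(* A (square, complex) matrix A has exactly k negative eigenvalues, counted
   with algebraic multiplicity: its characteristic polynomial splits as
   prod_(l <- s) (X - l) and exactly k of the roots l in s are negative
   reals.  (In a numClosedFieldType, l < 0 forces l to be real.)  The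
   multiset s of roots is unique, so k is well defined. *)
Definition neg_eigs (N : nat) (A : 'M[C]_N) (k : nat) : Prop :=
  exists s : seq C,
    char_poly A = \prod_(l <- s) ('X - l%:P) /\ count (fun l => l < 0) s = k.

Definition hermitian (N : nat) (A : 'M[C]_N) : Prop :=
  forall i j, A j i = (A i j)^*.

Definition psd (N : nat) (A : 'M[C]_N) : Prop :=
  hermitian A /\ forall l : C, root (char_poly A) l -> 0 <= l.

(* Admissible exceptional sets Lambda: subsets of the disk, at most
   countable, accumulating only on the unit circle (i.e. finitely many
   points in each closed disk of radius r < 1). *)
Definition discrete_in_disk (Lam : set C) : Prop :=
  Lam `<=` disk /\ countable Lam /\
  forall r : R, r < 1 -> finite_set (Lam `&` [set z | `|z| <= (r%:C)%C]).

Definition S_kappa (kappa : nat) (Lam : set C) (f : C -> C) : Prop :=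
  discrete_in_disk Lam /\
  (forall (N : nat) (z : 'I_N -> C), injective z ->
     (forall i, z i \in (disk `\` Lam)) ->
     exists k, (k <= kappa)%N /\ neg_eigs (PickM f z) k) /\
  (exists (N : nat) (z : 'I_N -> C), injective z /\
     (forall i, z i \in (disk `\` Lam)) /\ neg_eigs (PickM f z) kappa).

Definition fn (n : nat) (z : C) : C := z ^+ n * (2 - z) / (2 * z - 1).

End Defs.

From Pilot Require Import Defs.
From HB Require Import structures.
From mathcomp Require Import all_boot all_order all_algebra.
From mathcomp Require Import complex.
From mathcomp Require Import reals classical_sets cardinality.
From mathcomp Require Import ring lra zify.

(* The Pick kernel of f_n splits as
     (1 - f_n(z) f_n(w)^* ) / (1 - z w^* ) = sum_(k < n) (z w^* )^k - 3 g(z) g(w)^*,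
   with g(z) = z^n / (2z - 1).  Hence the Pick form x |-> x P x^* is a sum of n
   squares minus three times one square, nonnegative on the hyperplane
   sum_i x_i g(z_i) = 0: every Pick matrix has at most one negative eigenvalue.
   For n + 1 distinct points a Vandermonde system yields x with all the moments
   sum_i x_i z_i^k (k < n) zero but sum_i x_i g(z_i) = 1, so the form takes a
   negative value.  For n points close to 0, z_i^n is a small combination of the
   lower powers z_i^k (reduction modulo prod_i (X - z_i)), so the g-moment is
   controlled by the power moments and the form stays nonnegative. *)

Set Implicit Arguments.
Unset Strict Implicit.
Unset Printing Implicit Defensive.
Import Order.TTheory GRing.Theory Num.Theory.
Local Open Scope ring_scope.

Lemma char_poly_similar (F : comUnitRingType) N (U A : 'M[F]_N) : U \in unitmx ->
  char_poly (invmx U *m A *m U) = char_poly A.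
Proof.
move=> Uunit; rewrite /char_poly /char_poly_mx.
have -> : 'X%:M - map_mx polyC (invmx U *m A *m U) =
    map_mx polyC (invmx U) *m ('X%:M - map_mx polyC A) *m map_mx polyC U.
  rewrite mulmxBr mulmxBl !map_mxM; congr (_ - _).
  by rewrite mul_mx_scalar -scalemxAl -map_mxM mulVmx // map_mx1 scalemx1.
rewrite !det_mulmx mulrC mulrA -det_mulmx -map_mxM mulmxV //.
by rewrite map_mx1 det1 mul1r.
Qed.

Section HermitianForm.
Variable R : realType.
Local Notation C := R[i].

Definition hform N (A : 'M[C]_N) (x : 'rV[C]_N) : C :=
  (x *m A *m (map_mx Num.conj x)^T) 0 0.

Lemma hformE N (A : 'M[C]_N) x :
  hform A x = \sum_i \sum_j x 0 i * A i j * (x 0 j)^*.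
Proof.
rewrite /hform mxE [RHS]exchange_big; apply: eq_bigr => j _.
by rewrite !mxE big_distrl; apply: eq_bigr.
Qed.

Lemma hermitian_diagonal_form N (A : 'M[C]_N) : Defs.hermitian A ->
  exists (U : 'M[C]_N) (d : 'I_N -> C), [/\ U \in unitmx,
    char_poly A = \prod_(i < N) ('X - (d i)%:P),
    forall i, d i \is Num.real &
    forall y, hform A (y *m U) = \sum_i d i * (y 0 i * (y 0 i)^*)].
Proof.
move=> hA.
have hA' : A \is hermitianmx _ false (@Num.conj_op C).
  apply/is_hermitianmxP; rewrite expr0 scale1r.
  by apply/matrixP => i j; rewrite !mxE hA.
have /hermitian_normalmx/orthomx_spectralP Aeq := hA'.
set U := spectralmx A in Aeq; set D := spectral_diag A in Aeq.
have Uunitary : U \is unitarymx by apply: spectral_unitarymx.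
have Uunit : U \in unitmx by apply: spectral_unit.
exists U, (fun i => D 0 i); split => //.
- rewrite Aeq char_poly_similar // char_poly_trig ?diag_mx_is_trig //.
  by apply: eq_bigr => i _; rewrite mxE eqxx mulr1n.
- by move=> i; have /mxOverP := hermitian_spectral_diag_real hA'; apply.
- move=> y; rewrite /hform Aeq.
  have -> : (map_mx Num.conj (y *m U))^T =
      (U ^t (@Num.conj_op C))%sesqui *m (map_mx Num.conj y)^T.
    apply/matrixP => i j; rewrite !mxE rmorph_sum; apply: eq_bigr => k _.
    by rewrite !mxE rmorphM mulrC.
  rewrite !mulmxA mulmxK // mulmxtVK // !mxE; apply: eq_bigr => i _.
  rewrite !mxE (bigD1 i) //= big1 ?addr0; last first.
    by move=> j ji; rewrite mxE (negbTE ji) mulr0n mulr0.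
  by rewrite mxE eqxx mulr1n; ring.
Qed.

Definition card_neg N (d : 'I_N -> C) : nat := #|[pred i | d i < 0]|.

Section DiagonalForm.
Variables (N : nat) (A U : 'M[C]_N) (d : 'I_N -> C).
Hypothesis hformU : forall y, hform A (y *m U) = \sum_i d i * (y 0 i * (y 0 i)^*).

Lemma hform_delta k : hform A (delta_mx 0 k *m U) = d k.
Proof.
rewrite hformU (bigD1 k) //= big1 ?addr0; first by rewrite !mxE !eqxx /= mul1r conjC1 mulr1.
by move=> j /negbTE jk; rewrite !mxE jk /= mul0r mulr0.
Qed.

(* Two negative diagonal entries would give a plane on which the form is
   negative definite, and that plane meets the hyperplane [x *m w = 0]. *)
Lemma card_neg_le1 (w : 'cV[C]_N) :
  (forall x, (x *m w) 0 0 = 0 -> 0 <= hform A x) -> (card_neg d <= 1)%N.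
Proof.
move=> hw; rewrite /card_neg leqNgt; apply/negP => /card_gt1P [a [b [ha hb ab]]].
rewrite !inE /= in ha hb.
pose L (y : 'rV[C]_N) := (y *m U *m w) 0 0.
have L_lin p q y1 y2 : L (p *: y1 + q *: y2) = p * L y1 + q * L y2.
  by rewrite /L mulmxDl -!scalemxAl mulmxDl -!scalemxAl !mxE.
have [La0 | La_neq0] := eqVneq (L (delta_mx 0 a)) 0.
  by have := hw _ La0; rewrite hform_delta => /(lt_le_trans ha); rewrite ltxx.
pose al := L (delta_mx 0 b); pose be := - L (delta_mx 0 a).
pose y : 'rV_N := al *: delta_mx 0 a + be *: delta_mx 0 b.
have Ly : L y = 0 by rewrite L_lin /be /al; ring.
have y_entry k : y 0 k = al * (k == a)%:R + be * (k == b)%:R by rewrite !mxE eqxx.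
have := hw _ Ly; rewrite hformU (bigD1 a) //= (bigD1 b) /=; last by rewrite eq_sym.
rewrite big1; last first.
  move=> k /andP [kb ka]; rewrite y_entry (negbTE kb) (negbTE ka).
  by rewrite !mulr0 addr0 conjC0 !mulr0.
rewrite !y_entry eqxx (negbTE ab) eq_sym (negbTE ab) eqxx.
rewrite !mulr0 !mulr1 addr0 add0r addr0 => form_ge0.
have da_le0 : d a * (al * al^*) <= 0 by rewrite nmulr_rle0 // mul_conjC_ge0.
have db_lt0 : d b * (be * be^*) < 0 by rewrite nmulr_rlt0 // mul_conjC_gt0 oppr_eq0.
have := ler_ltD da_le0 db_lt0; rewrite addr0 => /lt_le_trans/(_ form_ge0).
by rewrite ltxx.
Qed.

Hypotheses (d_real : forall i, d i \is Num.real) (U_unit : U \in unitmx).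

Lemma card_neg_gt0 : (exists x, hform A x < 0) -> (0 < card_neg d)%N.
Proof.
case=> x; rewrite -(mulmxKV U_unit x) hformU => form_lt0.
rewrite /card_neg lt0n; apply/negP => /eqP/card0_eq d_nneg.
suff : 0 <= \sum_i d i * ((x *m invmx U) 0 i * ((x *m invmx U) 0 i)^*).
  by move/(lt_le_trans form_lt0); rewrite ltxx.
apply: sumr_ge0 => i _; apply: mulr_ge0; last exact: mul_conjC_ge0.
by rewrite real_leNgt ?real0 ?d_real //; move/negbT: (d_nneg i); rewrite inE.
Qed.

End DiagonalForm.

Lemma neg_eigs_diag N (A : 'M[C]_N) (d : 'I_N -> C) :
  char_poly A = \prod_(i < N) ('X - (d i)%:P) -> neg_eigs A (card_neg d).
Proof.
move=> cA; exists [seq d i | i <- enum 'I_N]; split; first by rewrite cA big_map big_enum.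
rewrite /card_neg count_map cardE /enum_mem size_filter count_filter.
by apply: eq_count => i; rewrite /= !inE andbT.
Qed.

Lemma hermitian_neg_eigs_le1 N (A : 'M[C]_N) (w : 'cV[C]_N) : Defs.hermitian A ->
  (forall x, (x *m w) 0 0 = 0 -> 0 <= hform A x) ->
  exists k, (k <= 1)%N /\ neg_eigs A k.
Proof.
move=> /hermitian_diagonal_form [U [d [_ cA _ hformU]]] hw.
exists (card_neg d); split; first exact: (card_neg_le1 hformU hw).
exact: neg_eigs_diag.
Qed.

Lemma hermitian_neg_eigs1 N (A : 'M[C]_N) (w : 'cV[C]_N) : Defs.hermitian A ->
  (forall x, (x *m w) 0 0 = 0 -> 0 <= hform A x) -> (exists x, hform A x < 0) ->
  neg_eigs A 1.
Proof.
move=> /hermitian_diagonal_form [U [d [Uunit cA d_real hformU]]] hw Aneg.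
suff <- : card_neg d = 1%N by exact: neg_eigs_diag.
apply/eqP; rewrite eqn_leq (card_neg_le1 hformU hw).
exact: (card_neg_gt0 hformU d_real Uunit Aneg).
Qed.

Lemma hermitian_psd N (A : 'M[C]_N) : Defs.hermitian A ->
  (forall x, 0 <= hform A x) -> psd A.
Proof.
move=> hA form_ge0; split => // l.
have [U [d [_ cA _ hformU]]] := hermitian_diagonal_form hA.
have -> : char_poly A = \prod_(l <- [seq d i | i <- enum 'I_N]) ('X - l%:P).
  by rewrite cA big_map big_enum.
rewrite root_prod_XsubC => /mapP [k _ ->].
by rewrite -(hform_delta hformU); apply: form_ge0.
Qed.

End HermitianForm.

Section PickKernel.
Variables (R : realType) (n : nat).
Local Notation C := R[i].

Definition gn (z : C) : C := z ^+ n / (2 * z - 1).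

Definition fn_domain (z : C) := `|z| < 1 /\ z != 2^-1.

Lemma double_sub1_neq0 (z : C) : z != 2^-1 -> 2 * z - 1 != 0.
Proof.
apply: contra; rewrite subr_eq0 => /eqP z2; apply/eqP.
have two_neq0 : (2 : C) != 0 by rewrite pnatr_eq0.
by rewrite -[z](mulKf two_neq0) z2 mulr1.
Qed.

Lemma fn_kernel (z w : C) : fn_domain z -> fn_domain w ->
  (1 - fn n z * (fn n w)^*) / (1 - z * w^*) =
  \sum_(k < n) (z * w^*) ^+ k - 3 * (gn z * (gn w)^*).
Proof.
move=> [z1 z2] [w1 w2].
have zw_neq1 : 1 - z * w^* != 0.
  rewrite subr_eq0; apply/negP => /eqP zw1.
  have : `|z * w^*| < 1.
    by rewrite normrM norm_conjC -[1](mulr1 1) ltr_pM ?normr_ge0.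
  by rewrite -zw1 normr1 ltxx.
have w_conj_neq0 : 2 * w^* - 1 != 0.
  have := double_sub1_neq0 w2; apply: contra => /eqP h.
  by rewrite -conjC_eq0 rmorphB rmorphM rmorph_nat rmorph1 h.
have geom : \sum_(k < n) (z * w^*) ^+ k = (1 - (z * w^*) ^+ n) / (1 - z * w^*).
  by apply: (mulIf zw_neq1); rewrite divfK // -[1 - _ ^+ n]opprB subrX1; ring.
rewrite geom /gn /fn !rmorphM !rmorphXn fmorphV !rmorphB !rmorphM rmorph_nat rmorph1.
rewrite exprMn; field.
by rewrite zw_neq1 w_conj_neq0 double_sub1_neq0.
Qed.

Lemma sqr_norm_sum N (u : 'I_N -> C) :
  `|\sum_i u i| ^+ 2 = \sum_i \sum_j u i * (u j)^*.
Proof.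
rewrite normCK rmorph_sum big_distrl; apply: eq_bigr => i _.
by rewrite big_distrr.
Qed.

Lemma hform_pick_fn N (z : 'I_N -> C) : (forall i, fn_domain (z i)) -> forall x,
  hform (PickM (@fn R n) z) x =
  \sum_(k < n) `|\sum_i x 0 i * z i ^+ k| ^+ 2 - 3 * `|\sum_i x 0 i * gn (z i)| ^+ 2.
Proof.
move=> zD x; rewrite hformE.
transitivity (\sum_i \sum_j (\sum_(k < n) (x 0 i * z i ^+ k) * (x 0 j * z j ^+ k)^*
    - 3 * ((x 0 i * gn (z i)) * (x 0 j * gn (z j))^*))).
  apply: eq_bigr => i _; apply: eq_bigr => j _.
  rewrite mxE fn_kernel // mulrBr mulrBl big_distrr big_distrl /=; congr (_ - _).
    by apply: eq_bigr => k _; rewrite rmorphM rmorphXn exprMn; ring.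
  by rewrite [(x 0 j * _)^*]rmorphM; ring.
under eq_bigr => i _ do rewrite sumrB.
rewrite sumrB; congr (_ - _).
  under eq_bigr => i _ do rewrite exchange_big.
  by rewrite exchange_big; apply: eq_bigr => k _; rewrite sqr_norm_sum.
rewrite sqr_norm_sum mulr_sumr.
by apply: eq_bigr => i _; rewrite mulr_sumr.
Qed.

End PickKernel.

Section PickInertia.
Variables (R : realType) (n : nat).
Local Notation C := R[i].

Lemma pickM_hermitian (f : C -> C) N (z : 'I_N -> C) : Defs.hermitian (PickM f z).
Proof.
move=> i j; rewrite !mxE fmorph_div !rmorphB !rmorph1 !rmorphM /= !conjCK.
by rewrite (mulrC (f (z j))) (mulrC (z j)).
Qed.

Lemma pick_fn_hform_ge0 N (z : 'I_N -> C) (x : 'rV[C]_N) : (forall i, fn_domain (z i)) ->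
  (x *m \col_i gn n (z i)) 0 0 = 0 -> 0 <= hform (PickM (@fn R n) z) x.
Proof.
move=> zD; rewrite hform_pick_fn // mxE => gx0.
have -> : \sum_i x 0 i * gn n (z i) = 0.
  by rewrite -[RHS]gx0; apply: eq_bigr => i _; rewrite mxE.
rewrite normr0 expr2 !mulr0 subr0.
by apply: sumr_ge0 => k _; apply: exprn_ge0.
Qed.

Lemma pick_fn_neg_eigs_le1 N (z : 'I_N -> C) : (forall i, fn_domain (z i)) ->
  exists k, (k <= 1)%N /\ neg_eigs (PickM (@fn R n) z) k.
Proof.
move=> zD; apply: (@hermitian_neg_eigs_le1 _ _ _ (\col_i gn n (z i))).
  exact: pickM_hermitian.
by move=> x; apply: pick_fn_hform_ge0.
Qed.

(* The witness is x_i = (2 z_i - 1) y_i, where y solves the Vandermonde system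
   sum_i z_i^k y_i = 2^(n - k) (k <= n): then the power moments telescope to 0
   while the g-moment is sum_i z_i^n y_i = 1. *)
Lemma pick_fn_hform_neg (z : 'I_n.+1 -> C) : injective z ->
  (forall i, fn_domain (z i)) -> exists x, hform (PickM (@fn R n) z) x < 0.
Proof.
move=> zinj zD.
pose V := Vandermonde n.+1 (\row_i z i).
have Vunit : V \in unitmx.
  rewrite unitmxE det_Vandermonde unitfE; apply/prodf_neq0 => i _.
  apply/prodf_neq0 => j ij; rewrite !mxE subr_eq0; apply/eqP => zji.
  by move: ij; rewrite (zinj _ _ zji) ltnn.
pose c : 'cV[C]_n.+1 := \col_k (2 ^+ (n - k)).
pose y := invmx V *m c.
have Vy k : (k <= n)%N -> \sum_i z i ^+ k * y i 0 = 2 ^+ (n - k).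
  move=> kn; have := congr1 (fun M : 'cV_n.+1 => M (inord k) 0) (mulKVmx Vunit c).
  rewrite /= !mxE inordK // => <-; apply: eq_bigr => i _.
  by rewrite !mxE inordK.
pose x : 'rV[C]_n.+1 := \row_i ((2 * z i - 1) * y i 0).
have moment0 (k : 'I_n) : \sum_i x 0 i * z i ^+ k = 0.
  have kn := ltn_ord k.
  transitivity (2 * \sum_i z i ^+ k.+1 * y i 0 - \sum_i z i ^+ k * y i 0).
    by rewrite mulr_sumr -sumrB; apply: eq_bigr => i _; rewrite mxE exprS; ring.
  by rewrite (Vy k.+1 kn) (Vy k (ltnW kn)) -(subnSK kn) exprS subrr.
have gmoment1 : \sum_i x 0 i * gn n (z i) = 1.
  have := Vy n (leqnn n); rewrite subnn expr0 => <-.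
  apply: eq_bigr => i _; rewrite mxE /gn; field.
  exact: double_sub1_neq0 (zD i).2.
exists x; rewrite hform_pick_fn // gmoment1 big1; last first.
  by move=> k _; rewrite moment0 normr0 expr2 mulr0.
by rewrite normr1 expr1n mulr1 sub0r oppr_lt0 ltr0n.
Qed.

Lemma pick_fn_neg_eigs1 (z : 'I_n.+1 -> C) : injective z ->
  (forall i, fn_domain (z i)) -> neg_eigs (PickM (@fn R n) z) 1.
Proof.
move=> zinj zD; apply: (@hermitian_neg_eigs1 _ _ _ (\col_i gn n (z i))).
- exact: pickM_hermitian.
- by move=> x; apply: pick_fn_hform_ge0.
- exact: pick_fn_hform_neg.
Qed.

End PickInertia.

Section ComplexNorm.
Variable R : realType.
Local Notation C := R[i].

(* The modulus as an element of [R], to allow linear real arithmetic. *)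
Definition cnorm (x : C) : R := complex.Re `|x|.

Lemma cnormE (x : C) : `|x| = ((cnorm x)%:C)%C.
Proof. by rewrite /cnorm RRe_real ?normr_real. Qed.

Lemma ltc_cnorm (x : C) (r : R) : (`|x| < (r%:C)%C) = (cnorm x < r).
Proof. by rewrite cnormE ltcR. Qed.

Lemma cnorm_ge0 x : 0 <= cnorm x.
Proof. by rewrite -lecR -cnormE normr_ge0. Qed.

Lemma cnormD x y : cnorm (x + y) <= cnorm x + cnorm y.
Proof. by rewrite -lecR rmorphD -!cnormE ler_normD. Qed.

Lemma cnormM x y : cnorm (x * y) = cnorm x * cnorm y.
Proof. by apply: complexI; rewrite rmorphM -!cnormE normrM. Qed.

Lemma cnormN x : cnorm (- x) = cnorm x.
Proof. by apply: complexI; rewrite -!cnormE normrN. Qed.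

Lemma cnormB x y : cnorm (x - y) <= cnorm x + cnorm y.
Proof. by rewrite -(cnormN y) cnormD. Qed.

Lemma cnormV x : cnorm x^-1 = (cnorm x)^-1.
Proof. by apply: complexI; rewrite fmorphV -!cnormE normfV. Qed.

Lemma cnorm_nat k : cnorm k%:R = k%:R.
Proof. by apply: complexI; rewrite -cnormE normr_nat rmorph_nat. Qed.

Lemma cnorm_sum I (r : seq I) (P : pred I) (F : I -> C) :
  cnorm (\sum_(i <- r | P i) F i) <= \sum_(i <- r | P i) cnorm (F i).
Proof.
elim/big_ind2: _ => //; first by rewrite (cnorm_nat 0).
by move=> a1 b1 a2 b2 h1 h2; apply: le_trans (cnormD _ _) _; apply: lerD.
Qed.

Definition coef_norm K (p : {poly C}) : R := \sum_(j < K) cnorm p`_j.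

Lemma coef_norm_ge0 K p : 0 <= coef_norm K p.
Proof. by apply: sumr_ge0 => j _; apply: cnorm_ge0. Qed.

Lemma coef_normD K p q : coef_norm K (p + q) <= coef_norm K p + coef_norm K q.
Proof.
rewrite /coef_norm -big_split /=; apply: ler_sum => j _; rewrite coefD; exact: cnormD.
Qed.

Lemma coef_normZ K c p : coef_norm K (c *: p) = cnorm c * coef_norm K p.
Proof. by rewrite /coef_norm mulr_sumr; apply: eq_bigr => j _; rewrite coefZ cnormM. Qed.

Lemma coef_normMX K p : coef_norm K (p * 'X) <= coef_norm K p.
Proof.
case: K => [|K]; first by rewrite /coef_norm !big_ord0.
rewrite /coef_norm big_ord_recl coefMX /= (cnorm_nat 0) add0r.
rewrite [X in _ <= X]big_ord_recr /=; apply: ler_wpDr; first exact: cnorm_ge0.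
by apply: ler_sum => j _; rewrite coefMX /=.
Qed.

(* Expanding prod_(a <- s) (X - a) one factor at a time: each factor at most
   doubles the coefficient norm, and the non-leading part carries a factor d. *)
Lemma coef_norm_prod_XsubC K (d : R) (s : seq C) : 0 <= d <= 1 ->
  all (fun a => cnorm a <= d) s ->
  coef_norm K (\prod_(a <- s) ('X - a%:P)) <= 2 ^+ size s /\
  coef_norm K ('X^(size s) - \prod_(a <- s) ('X - a%:P)) <= d * 2 ^+ size s.
Proof.
move=> /andP [d0 d1]; elim: s => [|b s IH] /=.
  rewrite big_nil subrr expr0 mulr1; split; last first.
    by rewrite /coef_norm big1 // => j _; rewrite coef0 (cnorm_nat 0).
  case: K => [|K]; rewrite /coef_norm ?big_ord0 ?ler01 // big_ord_recl big1 ?coef1 /=.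
    by rewrite (cnorm_nat 1) addr0.
  by move=> j _; rewrite coef1 /= (cnorm_nat 0).
move=> /andP [bd /IH [IH1 IH2]].
rewrite big_cons; set w := \prod_(a <- s) ('X - a%:P).
have e1 : ('X - b%:P) * w = w * 'X + (- b) *: w.
  by rewrite mulrBl mulrC scaleNr -mul_polyC; ring.
have e2 : 'X^((size s).+1) - ('X - b%:P) * w = ('X^(size s) - w) * 'X + b *: w.
  by rewrite e1 exprS scaleNr; ring.
have bw : cnorm b * coef_norm K w <= d * 2 ^+ size s.
  by apply: ler_pM; rewrite ?cnorm_ge0 ?coef_norm_ge0.
have pow_ge0 : 0 <= 2 ^+ size s :> R by apply: exprn_ge0.
have d_pow : d * 2 ^+ size s <= 2 ^+ size s by apply: ler_piMl.
split; [rewrite e1 | rewrite e2]; rewrite exprS;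
  apply: le_trans (coef_normD _ _ _) _; rewrite coef_normZ ?cnormN.
- by have := coef_normMX K w; lra.
- by have := coef_normMX K ('X^(size s) - w); lra.
Qed.

(* Reduction of X^N modulo prod_i (X - z_i). *)
Lemma pow_lower_powers N (z : 'I_N -> C) (d : R) : 0 <= d <= 1 ->
  (forall i, cnorm (z i) <= d) ->
  exists r : {poly C}, coef_norm N r <= d * 2 ^+ N /\
    forall i, z i ^+ N = \sum_(j < N) r`_j * z i ^+ j.
Proof.
move=> d01 zd; set s := [seq z i | i <- enum 'I_N].
have size_s : size s = N by rewrite size_map size_enum_ord.
have s_d : all (fun a => cnorm a <= d) s by apply/allP => a /mapP [i _ ->].
have [_] := coef_norm_prod_XsubC N d01 s_d; rewrite size_s.
set om := \prod_(a <- s) ('X - a%:P); set r := 'X^N - om => r_bound.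
exists r; split => // i.
have size_om : size om = N.+1 by rewrite size_prod_XsubC size_s.
have om_monic : om \is monic by apply: monic_prod_XsubC.
have size_r : (size r <= N)%N.
  apply/leq_sizeP => j hj; rewrite coefB coefXn.
  case: (ltngtP j N) hj => // [jN _|-> _]; first by rewrite nth_default ?size_om // subr0.
  by have := monicP om_monic; rewrite lead_coefE size_om /= => ->; rewrite subrr.
rewrite -horner_coef_wide // /r hornerD hornerN hornerXn.
have /rootP -> : root om (z i) by rewrite root_prod_XsubC; apply: map_f; rewrite mem_enum.
by rewrite subr0.
Qed.

Lemma doubling_recursion_bound (v m : nat -> C) (N : nat) (S : R) : 0 <= S ->
  (forall j, (j < N)%N -> v j = 2 * v j.+1 - m j) ->
  (forall j, (j < N)%N -> cnorm (m j) <= S) ->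
  forall j, (j <= N)%N -> cnorm (v j) <= 2 ^+ N * (cnorm (v N) + S).
Proof.
move=> S0 vrec mS.
have step k : (k <= N)%N -> cnorm (v (N - k)%N) + S <= 2 ^+ k * (cnorm (v N) + S).
  elim: k => [|k IH] kN; first by rewrite subn0 expr0 mul1r.
  have jN : (N - k.+1 < N)%N by lia.
  have eN : (N - k.+1).+1 = (N - k)%N by lia.
  have mSk := mS _ jN; have IHk := IH (ltnW kN).
  have := cnormB (2 * v (N - k)%N) (m (N - k.+1)%N).
  rewrite cnormM (cnorm_nat 2) => vB.
  rewrite (vrec _ jN) eN exprS -mulrA.
  by set P := 2 ^+ k * _ in IHk *; lra.
move=> j jN; have := step (N - j)%N (leq_subr _ _); rewrite subKn //.
have two_pow : 2 ^+ (N - j)%N <= 2 ^+ N :> R by rewrite ler_eXn2l ?leq_subr // ltr1n.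
have P0 : 0 <= cnorm (v N) + S by rewrite addr_ge0 ?cnorm_ge0.
have := ler_wpM2r P0 two_pow; lra.
Qed.

End ComplexNorm.

Section SmallPoints.
Variable R : realType.
Local Notation C := R[i].

(* With v_j = sum_i x_i z_i^j / (2 z_i - 1) one has v_j = 2 v_(j+1) - m_j,
   v_n = the g-moment and v_n = sum_(j < n) r_j v_j. *)
Lemma gn_moment_bound n (z : 'I_n -> C) (d : R) (x : 'rV[C]_n) : 0 <= d <= 1 ->
  (forall i, cnorm (z i) <= d) -> (forall i, z i != 2^-1) ->
  cnorm (\sum_i x 0 i * gn n (z i)) <= d * 4 ^+ n *
    (cnorm (\sum_i x 0 i * gn n (z i)) + \sum_(k < n) cnorm (\sum_i x 0 i * z i ^+ k)).
Proof.
move=> d01 zd z_half.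
pose m k := \sum_i x 0 i * z i ^+ k.
pose v j := \sum_i x 0 i * z i ^+ j / (2 * z i - 1).
set W := \sum_i x 0 i * gn n (z i); set S := \sum_(k < n) _.
have [r [r_bound zr]] := pow_lower_powers d01 zd.
have vN : v n = W by apply: eq_bigr => i _; rewrite mulrA.
have Wr : W = \sum_(j < n) r`_j * v j.
  rewrite [RHS](eq_bigr (fun j : 'I_n =>
      \sum_i r`_j * (x 0 i * z i ^+ j / (2 * z i - 1)))); last first.
    by move=> j _; rewrite mulr_sumr.
  rewrite exchange_big; apply: eq_bigr => i _.
  rewrite /gn zr mulr_suml mulr_sumr; apply: eq_bigr => j _; ring.
have vrec j : (j < n)%N -> v j = 2 * v j.+1 - m j.
  move=> _; rewrite /v /m mulr_sumr -sumrB; apply: eq_bigr => i _.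
  by rewrite exprS; field; apply: double_sub1_neq0.
have mS j : (j < n)%N -> cnorm (m j) <= S.
  move=> jn; rewrite /S (bigD1 (Ordinal jn)) //= lerDl.
  by apply: sumr_ge0 => k _; apply: cnorm_ge0.
have S0 : 0 <= S by apply: sumr_ge0 => k _; apply: cnorm_ge0.
have vbound j : (j <= n)%N -> cnorm (v j) <= 2 ^+ n * (cnorm W + S).
  by move=> jn; rewrite -vN; apply: (doubling_recursion_bound S0 vrec mS jn).
rewrite {1}Wr; apply: le_trans (cnorm_sum _ _ _) _.
apply: le_trans (_ : \sum_(j < n) cnorm r`_j * (2 ^+ n * (cnorm W + S)) <= _).
  apply: ler_sum => j _; rewrite cnormM; apply: ler_wpM2l; first exact: cnorm_ge0.
  exact/vbound/ltnW.
rewrite -mulr_suml -/(coef_norm n r).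
have -> : d * 4 ^+ n * (cnorm W + S) = d * 2 ^+ n * (2 ^+ n * (cnorm W + S)).
  by rewrite -[4]/(2 * 2)%:R natrM exprMn; ring.
by apply: ler_wpM2r r_bound; rewrite mulr_ge0 ?exprn_ge0 ?addr_ge0 ?cnorm_ge0.
Qed.

(* Chosen so that gn_moment_bound reads 4 (n + 1) w <= w + S, which together
   with S^2 <= n T (Cauchy-Schwarz) forces 3 w^2 <= T. *)
Definition psd_radius (n : nat) : R := (4 ^+ n * (4 * (n%:R + 1)))^-1.

Lemma psd_radius_gt0 n : 0 < psd_radius n.
Proof.
have n0 : 0 <= n%:R :> R := ler0n _ _.
by rewrite invr_gt0 mulr_gt0 ?exprn_gt0 //; lra.
Qed.

Lemma psd_radius_le n : psd_radius n <= 4^-1.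
Proof.
have n0 : 0 <= n%:R :> R := ler0n _ _.
have pow4 : 1 <= 4 ^+ n :> R by apply: exprn_ege1; lra.
have pos : 0 < 4 ^+ n * (4 * (n%:R + 1)) :> R by apply: mulr_gt0; lra.
by rewrite /psd_radius lef_pV2 ?posrE //; nra.
Qed.

Lemma fn_domain_small (z : C) : cnorm z < 4^-1 -> fn_domain z.
Proof.
move=> z4; split; first by rewrite ltc_cnorm; lra.
by apply/eqP => z2; move: z4; rewrite z2 cnormV (@cnorm_nat R 2); lra.
Qed.

Lemma sqr_sum_le (F : realFieldType) N (a : 'I_N -> F) :
  (\sum_i a i) ^+ 2 <= N%:R * \sum_i a i ^+ 2.
Proof.
rewrite expr2 mulr_suml.
have am_gm i j : a i * a j <= (a i ^+ 2 + a j ^+ 2) / 2.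
  by have := sqr_ge0 (a i - a j); nra.
apply: le_trans (_ : \sum_i \sum_j (a i ^+ 2 + a j ^+ 2) / 2 <= _).
  by apply: ler_sum => i _; rewrite mulr_sumr; apply: ler_sum => j _; apply: am_gm.
have sum_const : \sum_(i < N) \sum_(j < N) a i ^+ 2 = N%:R * \sum_i a i ^+ 2.
  by rewrite mulr_sumr; apply: eq_bigr => i _; rewrite sumr_const card_ord mulr_natl.
under eq_bigr => i _ do rewrite -mulr_suml big_split.
by rewrite -mulr_suml big_split /= sum_const exchange_big sum_const; lra.
Qed.

Lemma sqr_le_of_moment_bound (F : realFieldType) (k T S w : F) : 1 <= k ->
  0 <= w -> S ^+ 2 <= k * T -> 4 * (k + 1) * w <= w + S -> 3 * w ^+ 2 <= T.
Proof.
move=> k1 w0 ST wS.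
have lin : (4 * k + 3) * w <= S by lra.
have lin0 : 0 <= (4 * k + 3) * w by apply: mulr_ge0 => //; lra.
have sqr : ((4 * k + 3) * w) ^+ 2 <= S ^+ 2 by rewrite !expr2; apply: ler_pM.
have : 0 <= (16 * k ^+ 2 + 21 * k + 9) * w ^+ 2 by rewrite mulr_ge0 ?sqr_ge0 //; nra.
nra.
Qed.

Lemma pick_fn_hform_ge0_small n (z : 'I_n -> C) : (0 < n)%N ->
  (forall i, cnorm (z i) < psd_radius n) -> forall x, 0 <= hform (PickM (@fn R n) z) x.
Proof.
move=> n_gt0 zr x.
have zD i : fn_domain (z i).
  by apply: fn_domain_small; apply: lt_le_trans (zr i) (psd_radius_le n).
rewrite hform_pick_fn //.
set W := \sum_i x 0 i * gn n (z i).
have -> : \sum_(k < n) `|\sum_i x 0 i * z i ^+ k| ^+ 2 - 3 * `|W| ^+ 2 =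
    ((\sum_(k < n) cnorm (\sum_i x 0 i * z i ^+ k) ^+ 2 - 3 * cnorm W ^+ 2)%:C)%C.
  rewrite rmorphB rmorphM rmorph_nat rmorph_sum [`|W|]cnormE rmorphXn; congr (_ - _).
  by apply: eq_bigr => k _; rewrite cnormE rmorphXn.
rewrite ler0c subr_ge0.
apply: (@sqr_le_of_moment_bound _ n%:R _ (\sum_(k < n) cnorm (\sum_i x 0 i * z i ^+ k))).
- by rewrite ler1n.
- exact: cnorm_ge0.
- exact: sqr_sum_le.
- have n0 : 0 <= n%:R :> R := ler0n _ _.
  have d01 : 0 <= psd_radius n <= 1.
    by rewrite ltW ?psd_radius_gt0 //=; have := psd_radius_le n; lra.
  have := gn_moment_bound x d01 (fun i => ltW (zr i)) (fun i => (zD i).2).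
  have scale : psd_radius n * 4 ^+ n * (4 * (n%:R + 1)) = 1.
    have pos : 0 < 4 ^+ n * (4 * (n%:R + 1)) :> R.
      by apply: mulr_gt0; [apply: exprn_gt0 |]; lra.
    by rewrite /psd_radius -mulrA mulVf // lt0r_neq0.
  have c0 : 0 <= 4 * (n%:R + 1) :> R by lra.
  move=> /(ler_wpM2l c0); rewrite mulrA (mulrC _ (psd_radius n * 4 ^+ n)) scale mul1r.
  by rewrite mulrC.
Qed.

End SmallPoints.

Local Open Scope classical_set_scope.

Lemma fn_in_S1 (R : realType) n : S_kappa 1 [set (2 : R[i])^-1] (@fn R n).
Proof.
have zD (z : R[i]) : z \in @disk R `\` [set 2^-1] -> fn_domain z.
  by move/set_mem => [z1 z2]; split => //; apply/eqP.
split; last split.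
- split; first by move=> u ->; rewrite /disk /= normfV normr_nat invf_lt1 ?ltr0n ?ltr1n.
  split; first exact: countable1.
  by move=> r _; apply: finite_setIl; exact: finite_set1.
- by move=> N z _ zdisk; apply: pick_fn_neg_eigs_le1 => i; apply/zD/zdisk.
pose z (i : 'I_n.+1) : R[i] := i%:R / (4 * n.+1%:R).
have c_neq0 : (4 * n.+1%:R : R[i]) != 0 by rewrite mulf_neq0 ?pnatr_eq0.
have z4 i : fn_domain (z i).
  apply: fn_domain_small; rewrite cnormM cnormV cnormM !cnorm_nat.
  rewrite ltr_pdivrMr ?mulr_gt0 ?ltr0n // mulrA mulVf ?pnatr_eq0 // mul1r ltr_nat.
  exact: ltn_ord.
have zinj : injective z.
  move=> i j /(mulIf (invr_neq0 c_neq0))/eqP; rewrite eqr_nat => /eqP.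
  exact: val_inj.
exists n.+1, z; split => //; split; last exact: pick_fn_neg_eigs1.
by move=> i; apply: mem_set; split; [exact: (z4 i).1 | move=> /= zi; case/eqP: (z4 i).2].
Qed.

Unset Implicit Arguments.

Theorem mainTheorem10 (R : realType) (n : nat) (hn : (0 < n)%N) :
  S_kappa 1 [set (2 : R[i])^-1] (@fn R n) /\
  (exists delta : R, 0 < delta /\
     forall z : 'I_n -> R[i], injective z ->
       (forall i, `|z i| < (delta%:C)%C) -> psd (PickM (@fn R n) z)) /\
  (exists delta' : R, 0 < delta' /\
     forall z : 'I_n.+1 -> R[i], injective z ->
       (forall i, `|z i| < (delta'%:C)%C) -> neg_eigs (PickM (@fn R n) z) 1).
Proof.
split; first exact: fn_in_S1.
split.
  exists (psd_radius R n); split; first exact: psd_radius_gt0.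
  move=> z _ zr; apply: hermitian_psd; first exact: pickM_hermitian.
  by apply: pick_fn_hform_ge0_small => // i; rewrite -ltc_cnorm.
exists 4^-1; split; first by rewrite invr_gt0.
move=> z zinj z4; apply: pick_fn_neg_eigs1 => // i.
by apply: fn_domain_small; rewrite -ltc_cnorm.
Qed.
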